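(* Let $(x,y)$ and $(x',y')$ be $\mathbf{x}$-vertices of $R$. If $ax'\in\operatorname{Band}_{\mathbf{x}}(y)$, then \[ d_R((x,y),(x',y'))\le d(P_A)+2d(\bar A)+d(\bar B)+2. \]
   Context: Let $A\in\mathbb{R}^{m_1\times n_1}$, nonzero $a\in\mathbb{R}^{1\times n_1}$, nonzero $b\in\mathbb{R}^{1\times n_2}$, $B\in\mathbb{R}^{m_2\times n_2}$, $c_A\in\mathbb{R}^{m_1}$, $c_B\in\mathbb{R}^{m_2}$, $c_a,c_b\in\mathbb{R}$, and $R=\{(x,y)\in\mathbb{R}^{n_1}\times\mathbb{R}^{n_2}: Ax=c_A,\ ax+by=c_a+c_b,\ By=c_B,\ x,y\ge 0\}$. Assume $R$ is simple (nondegenerate). Let $P_A=\{x: Ax=c_A, x\ge 0\}$, $\bar A=\begin{bmatrix}A\\ a\end{bmatrix}$, $\bar B=\begin{bmatrix}b\\ B\end{bmatrix}$. A vertex $(x,y)$ of $R$ is an $\mathbf{x}$-vertex if $x$ is a vertex of $P_A$; for such a vertex, $\operatorname{Band}_{\mathbf{x}}(y):=\{c_a+c_b-bz : Bz=c_B,\ \operatorname{supp}(z)\subseteq\operatorname{supp}(y),\ z\ge 0\}$, where $\operatorname{supp}$ is the set of indices of nonzero coordinates. $d_R(v,w)$ is the minimum number of edges of an edge walk in $R$ from $v$ to $w$. For a polyhedron $P$, $d(P)$ is its combinatorial diameter, and for a matrix $M\in\mathbb{R}^{m\times n}$, $d(M):=\max\{d(\{z: Mz=r, z\ge 0\}): r\in\mathbb{R}^m\}$.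 *)

From HB Require Import structures.
From mathcomp Require Import all_boot all_order all_algebra.
Set Implicit Arguments. Unset Strict Implicit. Unset Printing Implicit Defensive.
Import Order.TTheory GRing.Theory Num.Theory.
Local Open Scope ring_scope.

Section Polyhedra.
Variable R : realFieldType.

Definition polyhedron (m n : nat) (M : 'M[R]_(m, n)) (r : 'cV[R]_m) (z : 'cV[R]_n) : Prop :=
  M *m z = r /\ forall i, 0 <= z i 0.

Definition is_vertex (n : nat) (P : 'cV[R]_n -> Prop) (v : 'cV[R]_n) : Prop :=
  P v /\ forall d : 'cV[R]_n, P (v + d) -> P (v - d) -> d = 0.

Definition segment (n : nat) (v w z : 'cV[R]_n) : Prop :=
  exists t : R, 0 <= t /\ t <= 1 /\ z = t *: v + (1 - t) *: w.

(* v,w are joined by an edge: [v,w] is a one-dimensional (exposed) face of P. *)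
Definition is_edge (n : nat) (P : 'cV[R]_n -> Prop) (v w : 'cV[R]_n) : Prop :=
  is_vertex P v /\ is_vertex P w /\ v <> w /\
  exists c : 'rV[R]_n,
    (forall z, P z -> (c *m z) 0 0 <= (c *m v) 0 0) /\
    (forall z, (P z /\ (c *m z) 0 0 = (c *m v) 0 0) <-> segment v w z).

Fixpoint dist_le (n : nat) (P : 'cV[R]_n -> Prop) (k : nat) (v w : 'cV[R]_n) : Prop :=
  match k with
  | O => v = w
  | S k' => v = w \/ exists u, is_edge P v u /\ dist_le P k' u w
  end.

Definition diam_le (n : nat) (P : 'cV[R]_n -> Prop) (D : nat) : Prop :=
  forall v w, is_vertex P v -> is_vertex P w -> dist_le P D v w.

(* d(M) <= D, with d(M) = max_r d({z : M z = r, z >= 0}) *)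
Definition mat_diam_le (m n : nat) (M : 'M[R]_(m, n)) (D : nat) : Prop :=
  forall r : 'cV[R]_m, diam_le (polyhedron M r) D.

Definition std_nondegenerate (m n : nat) (M : 'M[R]_(m, n)) (r : 'cV[R]_m) : Prop :=
  forall v, is_vertex (polyhedron M r) v -> #|[set i | v i 0 != 0]| = \rank M.

(* Constraint matrix and right-hand side of R, in the variables col_mx x y. *)
Definition RM (m1 n1 m2 n2 : nat) (A : 'M[R]_(m1, n1)) (a : 'rV[R]_n1)
  (b : 'rV[R]_n2) (B : 'M[R]_(m2, n2)) : 'M[R]_(m1 + (1 + m2), n1 + n2) :=
  col_mx (row_mx A 0) (col_mx (row_mx a b) (row_mx 0 B)).

Definition Rr (m1 m2 : nat) (cA : 'cV[R]_m1) (cB : 'cV[R]_m2) (ca cb : R)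
  : 'cV[R]_(m1 + (1 + m2)) :=
  col_mx cA (col_mx (ca + cb)%:M cB).

Definition x_vertex (m1 n1 m2 n2 : nat) (A : 'M[R]_(m1, n1)) (a : 'rV[R]_n1)
  (b : 'rV[R]_n2) (B : 'M[R]_(m2, n2)) (cA : 'cV[R]_m1) (cB : 'cV[R]_m2) (ca cb : R)
  (x : 'cV[R]_n1) (y : 'cV[R]_n2) : Prop :=
  is_vertex (polyhedron (RM A a b B) (Rr cA cB ca cb)) (col_mx x y) /\
  is_vertex (polyhedron A cA) x.

Definition in_band (m2 n2 : nat) (b : 'rV[R]_n2) (B : 'M[R]_(m2, n2))
  (cB : 'cV[R]_m2) (ca cb : R) (y : 'cV[R]_n2) (t : R) : Prop :=
  exists z : 'cV[R]_n2,
    [/\ B *m z = cB, (forall i, 0 <= z i 0),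
        (forall i, z i 0 != 0 -> y i 0 != 0) &
        t = ca + cb - (b *m z) 0 0].

End Polyhedra.

(** Follow an edge walk x = p_0, ..., p_k = x' of P_A with k <= d(P_A).  Because (x, y)
    is a vertex of R, for every s in Band_x(y) there is exactly one z >= 0 with B z = c_B,
    supp z \subset supp y and s + b z = c_a + c_b; when a p_i lies in the band, p_i together
    with this z is a vertex of R, and the lifts of consecutive p_i are adjacent.  When the
    walk leaves the band on one side, it is rerouted through the vertices (r, w) of R in
    which w is the witness of that end of the band: they all share w, so their r are
    vertices of one polyhedron {A r = c_A, a r = s, r >= 0}, hence within d(Abar) of each
    other.  Each side is detoured once, from its first to its last visit, so the lift of x'
    is reached within d(P_A) + 2 d(Abar) steps, and the polyhedron
    {b v = c_a + c_b - a x', B v = c_B, v >= 0} joins it to (x', y') in d(Bbar) more. *)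

From HB Require Import structures.
From mathcomp Require Import all_boot all_order all_algebra.
From mathcomp Require Import ring lra zify.
From Stdlib Require Import Classical.
Import Order.TTheory GRing.Theory Num.Theory.
Local Open Scope ring_scope.
Set Implicit Arguments. Unset Strict Implicit. Unset Printing Implicit Defensive.

Local Notation dot c z := ((c *m z) 0 0).

Section Intervals.
Variable R : realFieldType.

Definition convex_set (S : R -> Prop) :=
  forall s1 s2 s, S s1 -> S s2 -> s1 <= s <= s2 -> S s.

Lemma convex_set_ub (S : R -> Prop) beta t s1 : convex_set S -> S beta -> S t ->
  ~ S s1 -> t < s1 -> (forall s, beta < s <= s1 -> ~ S s) -> forall s, S s -> s <= beta.
Proof.
move=> convS Sbeta St notS1 t_lt gap s Ss.
have beta_lt : beta < s1.
  rewrite ltNge; apply/negP => s1_le; apply: notS1.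
  by apply: (convS _ _ _ St Sbeta); rewrite ltW.
rewrite leNgt; apply/negP => beta_s; have [s_le|s1_lt] := leP s s1.
  by apply: (gap s) => //; rewrite beta_s.
by apply: notS1; apply: (convS _ _ _ Sbeta Ss); rewrite !ltW.
Qed.

Lemma convex_set_lb (S : R -> Prop) beta t s1 : convex_set S -> S beta -> S t ->
  ~ S s1 -> s1 < t -> (forall s, s1 <= s < beta -> ~ S s) -> forall s, S s -> beta <= s.
Proof.
move=> convS Sbeta St notS1 lt_t gap s Ss.
have convNS : convex_set (fun s => S (- s)).
  by move=> s1' s2' s' ? ? ?; apply: (convS (- s2') (- s1')) => //; rewrite !lerN2 andbC.
rewrite -lerN2; apply: (convex_set_ub (t := - t) (s1 := - s1) convNS); rewrite ?opprK //.
- by rewrite ltrN2.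
- by move=> s' /andP[? ?]; apply: gap; rewrite lerNr ltrNl; apply/andP.
Qed.

Lemma between_conv (s1 s2 s : R) : s1 <= s <= s2 ->
  exists2 t, 0 <= t <= 1 & s = t * s1 + (1 - t) * s2.
Proof.
move=> /andP[s1s ss2]; have [s12|s12] := eqVneq s1 s2.
  by exists 1; rewrite ?ler01 ?lexx // subrr mul0r addr0 mul1r; lra.
have s12_gt0 : 0 < s2 - s1 by rewrite subr_gt0 lt_neqAle s12 (le_trans s1s).
exists ((s2 - s) / (s2 - s1)).
  by apply/andP; split; [rewrite divr_ge0 //; lra | rewrite ler_pdivrMr //; lra].
by field; rewrite lt0r_neq0.
Qed.

Lemma between_lerp (s0 s1 t : R) : (s0 <= t <= s1) || (s1 <= t <= s0) ->
  exists2 l, 0 <= l <= 1 & t = s0 + l * (s1 - s0).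
Proof.
case/orP=> /between_conv[l l01 ->]; last by exists l => //; ring.
by exists (1 - l); [move: l01 => /andP[? ?]; apply/andP; split; lra | ring].
Qed.

Lemma affine_gap (S : R -> Prop) s0 ds l : l <= 1 ->
  (forall l', l < l' <= 1 -> ~ S (s0 + l' * ds)) ->
  forall s, (s0 + l * ds < s <= s0 + ds) || (s0 + ds <= s < s0 + l * ds) -> ~ S s.
Proof.
move=> l_le1 gap s s_between; have [ds_lt0|ds_gt0|ds0] := ltgtP ds 0; last first.
  by move: s_between; rewrite ds0 mulr0 addr0 => /orP[] /andP[? ?]; lra.
all: have ds_neq0 : ds != 0 by [rewrite lt_eqF | rewrite gt_eqF].
all: pose l' := (s - s0) / ds.
all: have sE : s = s0 + l' * ds by rewrite /l' mulfVK // addrC subrK.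
all: clearbody l'; subst s; apply: gap; move: s_between; clear ds_neq0.
all: by case/orP=> /andP[? ?]; apply/andP; split; nra.
Qed.

End Intervals.

(** * Vertices and edges of standard-form polyhedra *)

Section Polyhedra.
Variable R : realFieldType.

Lemma dotD n (c : 'rV[R]_n) (u v : 'cV[R]_n) : dot c (u + v) = dot c u + dot c v.
Proof. by rewrite mulmxDr mxE. Qed.

Lemma dotZ n (c : 'rV[R]_n) s (v : 'cV[R]_n) : dot c (s *: v) = s * dot c v.
Proof. by rewrite -scalemxAr mxE. Qed.

Lemma dotB n (c : 'rV[R]_n) (u v : 'cV[R]_n) : dot c (u - v) = dot c u - dot c v.
Proof. by rewrite mulmxBr !mxE. Qed.

Lemma dot0 n (c : 'rV[R]_n) : dot c (0 : 'cV[R]_n) = 0.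
Proof. by rewrite mulmx0 mxE. Qed.

Lemma mx11_eq (X Y : 'M[R]_1) : X = Y <-> X 0 0 = Y 0 0.
Proof. by split=> [-> // | e]; rewrite [X]mx11_scalar [Y]mx11_scalar e. Qed.

Lemma mxDE p q (X Y : 'M[R]_(p, q)) i j : (X + Y) i j = X i j + Y i j.
Proof. by rewrite mxE. Qed.

Definition supp_le n (e z : 'cV[R]_n) := forall i, z i 0 = 0 -> e i 0 = 0.

Definition supp_indep m n (M : 'M[R]_(m, n)) (z : 'cV[R]_n) :=
  forall e, M *m e = 0 -> supp_le e z -> e = 0.

Lemma supp_indep_inj m n (M : 'M[R]_(m, n)) (z v w : 'cV[R]_n) : supp_indep M z ->
  M *m v = M *m w -> supp_le v z -> supp_le w z -> v = w.
Proof.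
move=> indep Mvw vz wz; apply/eqP; rewrite -subr_eq0; apply/eqP/indep.
  by rewrite mulmxBr Mvw subrr.
by move=> i zi; rewrite !mxE vz // wz // subrr.
Qed.

Lemma supp_indep_sub m n (M : 'M[R]_(m, n)) (z z' : 'cV[R]_n) :
  supp_indep M z -> supp_le z' z -> supp_indep M z'.
Proof. by move=> indep z'z e Me ez'; apply: indep Me _ => i /z'z/ez'. Qed.

Lemma perturb_nonneg n (z d : 'cV[R]_n) : (forall i, 0 <= z i 0) -> supp_le d z ->
  exists2 e : R, 0 < e & forall i, 0 <= (z + e *: d) i 0 /\ 0 <= (z - e *: d) i 0.
Proof.
move=> z_ge0 dz.
have ratio_ge0 i : 0 <= `|d i 0| / z i 0 by rewrite divr_ge0.
set S := \sum_(i | z i 0 != 0) `|d i 0| / z i 0.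
have S_ge0 : 0 <= S by exact: sumr_ge0.
have le_S i : z i 0 != 0 -> `|d i 0| / z i 0 <= S.
  by move=> zi; rewrite /S (bigD1 i) //= lerDl sumr_ge0.
exists (1 + S)^-1 => [|i]; rewrite ?invr_gt0 ?mxE; first lra.
have [zi0|zi0] := eqVneq (z i 0) 0; first by rewrite dz // zi0 mulr0 addr0 subr0.
have zi_gt0 : 0 < z i 0 by rewrite lt_def zi0 z_ge0.
have S1_gt0 : 0 < 1 + S by lra.
have dS : `|d i 0| <= S * z i 0 by rewrite -ler_pdivrMr // le_S.
have : (1 + S)^-1 * `|d i 0| <= z i 0 by rewrite mulrC ler_pdivrMr //; nra.
have -> : (1 + S)^-1 * `|d i 0| = `|(1 + S)^-1 * d i 0|.
  by rewrite normrM gtr0_norm ?invr_gt0.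
have := ler_norm ((1 + S)^-1 * d i 0); have := ler_norm (- ((1 + S)^-1 * d i 0)).
rewrite normrN; split; lra.
Qed.

Lemma polyhedron_conv m n (M : 'M[R]_(m, n)) r v w t :
  polyhedron M r v -> polyhedron M r w -> 0 <= t <= 1 ->
  polyhedron M r (t *: v + (1 - t) *: w).
Proof.
move=> [Mv v_ge0] [Mw w_ge0] /andP[t0 t1]; split.
  by rewrite mulmxDr -!scalemxAr Mv Mw -scalerDl addrC subrK scale1r.
by move=> i; rewrite !mxE; have := v_ge0 i; have := w_ge0 i; nra.
Qed.

Lemma vertex_polyhedronP m n (M : 'M[R]_(m, n)) r z :
  is_vertex (polyhedron M r) z <-> polyhedron M r z /\ supp_indep M z.
Proof.
split=> [[[Mz z_ge0] extreme] | [Pz indep]]; last first.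
  split=> // d [Mzd zd_ge0] [_ zd_ge0']; apply: indep.
  - by move: Mzd; rewrite mulmxDr Pz.1 -{2}[r]addr0 => /addrI.
  - by move=> i zi; have := zd_ge0 i; have := zd_ge0' i; rewrite !mxE zi; lra.
split=> // e Me ez; have [eps eps_gt0 small] := perturb_nonneg z_ge0 ez.
suff /eqP : eps *: e = 0 by rewrite scaler_eq0 gt_eqF // => /eqP.
apply: extreme; split=> [|i]; rewrite ?mulmxBr ?mulmxDr -?scalemxAr ?Me ?scaler0
  ?addr0 ?subr0 ?Mz //; [exact: (small i).1 | exact: (small i).2].
Qed.

Lemma segment_sym n (v w z : 'cV[R]_n) : segment v w z -> segment w v z.
Proof.
move=> [t [t0 [t1 ->]]]; exists (1 - t); split; [lra | split; [lra |]].
by rewrite [1 - (1 - t)]subKr addrC.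
Qed.

Lemma edge_sym n (P : 'cV[R]_n -> Prop) v w : is_edge P v w -> is_edge P w v.
Proof.
move=> [vv [vw [vw_neq [c [c_max face]]]]].
have [_ cw] : P w /\ dot c w = dot c v.
  apply/face; exists 0; rewrite scale0r add0r subr0 scale1r.
  by split; [lra | split; [lra |]].
do 3!split=> //; first by move=> /esym.
exists c; split=> [z Pz | z]; first by rewrite cw; exact: c_max.
by rewrite cw; split=> [/face | /segment_sym/face]; first exact: segment_sym.
Qed.

Lemma supp_segment_edge m n (M : 'M[R]_(m, n)) r (v w : 'cV[R]_n) :
  is_vertex (polyhedron M r) v -> is_vertex (polyhedron M r) w -> v <> w ->
  (forall z, polyhedron M r z -> (forall i, v i 0 = 0 -> w i 0 = 0 -> z i 0 = 0) ->
     segment v w z) -> is_edge (polyhedron M r) v w.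
Proof.
move=> vv vw vw_neq seg.
(* c is maximized over P exactly at the points supported in supp v \cup supp w. *)
pose c : 'rV[R]_n := \row_i (if (v i 0 == 0) && (w i 0 == 0) then -1 else 0).
have cE (z : 'cV[R]_n) : dot c z = - \sum_(i | (v i 0 == 0) && (w i 0 == 0)) z i 0.
  rewrite mxE -sumrN [RHS]big_mkcond; apply: eq_bigr => i _.
  by rewrite mxE; case: ifP => _; rewrite ?mulN1r ?mul0r ?oppr0.
have cv : dot c v = 0 by rewrite cE big1 ?oppr0 // => i /andP[/eqP].
have cw : dot c w = 0 by rewrite cE big1 ?oppr0 // => i /andP[_ /eqP].
do 3!split=> //; exists c; split=> [z [_ z_ge0] | z].
  by rewrite cE cv oppr_le0 sumr_ge0.
split=> [[[Mz z_ge0]] | [t [t0 [t1 ->]]]].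
  rewrite cE cv => /eqP; rewrite oppr_eq0 => /eqP/psumr_eq0P z0.
  by apply: seg => // i vi wi; rewrite z0 // vi wi eqxx.
split; first by apply: polyhedron_conv vv.1 vw.1 _; apply/andP.
by rewrite dotD !dotZ cv cw !mulr0 addr0.
Qed.

Lemma edge_supp_segment m n (M : 'M[R]_(m, n)) r (v w z : 'cV[R]_n) :
  is_edge (polyhedron M r) v w -> polyhedron M r z ->
  (forall i, v i 0 = 0 -> w i 0 = 0 -> z i 0 = 0) -> segment v w z.
Proof.
move=> [vv [vw [_ [c [c_max face]]]]] Pz zvw.
apply/face; split=> //.
have half0 : 0 < (2 : R)^-1 by rewrite invr_gt0; lra.
pose mid := 2^-1 *: v + (1 - 2^-1) *: w.
have [Pmid cmid] : polyhedron M r mid /\ dot c mid = dot c v.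
  by apply/face; exists 2^-1; split; [lra | split=> //; rewrite invf_le1; lra].
have mid_supp : supp_le (z - mid) mid.
  move=> i; rewrite !mxE => mid0.
  have := vv.1.2 i; have := vw.1.2 i => wi vi.
  have vi0 : v i 0 = 0 by nra.
  have wi0 : w i 0 = 0 by nra.
  by rewrite zvw // vi0 wi0 !mulr0 addr0 subrr.
(* The midpoint of [v, w] can be moved both ways along z - mid without leaving P,
   and c cannot increase either way. *)
have [eps eps_gt0 small] := perturb_nonneg Pmid.2 mid_supp; clearbody mid.
have Md : M *m (z - mid) = 0 by rewrite mulmxBr Pz.1 Pmid.1 subrr.
have Pshift (s : R) : (forall i, 0 <= (mid + s *: (z - mid)) i 0) ->
    polyhedron M r (mid + s *: (z - mid)).
  by split=> //; rewrite mulmxDr -scalemxAr Md scaler0 addr0 Pmid.1.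
have Pminus : polyhedron M r (mid + (- eps) *: (z - mid)).
  by apply: Pshift => i; rewrite scaleNr; exact: (small i).2.
have := c_max _ (Pshift eps (fun i => (small i).1)); have := c_max _ Pminus.
rewrite !dotD !dotZ dotB cmid => ? ?.
have /eqP : eps * (dot c z - dot c v) = 0 by lra.
by rewrite mulf_eq0 gt_eqF //= subr_eq0 => /eqP.
Qed.

Lemma ratio_test n (w d : 'cV[R]_n) T : (forall i, 0 <= w i 0) -> 0 <= T ->
  exists t, [/\ 0 <= t <= T, forall i, 0 <= (w + t *: d) i 0 &
    t < T -> exists2 j, d j 0 < 0 & (w + t *: d) j 0 = 0].
Proof.
move=> w_ge0 T_ge0.
have entryE t i : (w + t *: d) i 0 = w i 0 + t * d i 0 by rewrite !mxE.
pose blocked j := w j 0 + T * d j 0 < 0.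
have [j0 j0_blocked | unblocked] := pickP blocked; last first.
  exists T; split=> [|i|]; rewrite ?lexx ?T_ge0 ?ltxx // entryE leNgt.
  by have := unblocked i; rewrite /blocked => ->.
have blocked_neg j : blocked j -> d j 0 < 0.
  by rewrite /blocked => ?; have := w_ge0 j; nra.
pose rho j := w j 0 / - d j 0.
have rhoE j : blocked j -> rho j * - d j 0 = w j 0.
  by move=> /blocked_neg ?; rewrite mulfVK // oppr_eq0 lt_eqF.
have [j j_blocked rho_min] := arg_minP rho j0_blocked.
have rho_ge0 : 0 <= rho j by rewrite divr_ge0 // oppr_ge0 ltW ?blocked_neg.
have rho_lt : rho j < T.
  rewrite ltr_pdivrMr ?oppr_gt0 ?blocked_neg //.
  by move: j_blocked; rewrite /blocked; lra.
have dj_lt0 := blocked_neg j j_blocked; have rhojE := rhoE j j_blocked.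
exists (rho j); split=> [|i|_]; first by rewrite rho_ge0 ltW.
- rewrite entryE; have := w_ge0 i.
  have [di_ge0|di_lt0] := leP 0 (d i 0); first nra.
  case bi: (blocked i); first by have := rho_min i bi; have := rhoE i bi; nra.
  by move: bi; rewrite /blocked => /negbT; rewrite -leNgt; nra.
- by exists j; rewrite // entryE; lra.
Qed.

Definition lerp n (p p' : 'cV[R]_n) (l : R) := p + l *: (p' - p).

Lemma lerp_inj n (p p' : 'cV[R]_n) l1 l2 : p <> p' -> lerp p p' l1 = lerp p p' l2 -> l1 = l2.
Proof.
move=> pp' /addrI/eqP; rewrite -subr_eq0 -scalerBl scaler_eq0 !subr_eq0.
by case/orP=> /eqP // p'p; case: pp'.
Qed.

Lemma lerpE n (p p' : 'cV[R]_n) l i j : lerp p p' l i j = p i j + l * (p' i j - p i j).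
Proof. by rewrite !mxE. Qed.

Lemma dot_lerp n (c : 'rV[R]_n) (p p' : 'cV[R]_n) l :
  dot c (lerp p p' l) = dot c p + l * (dot c p' - dot c p).
Proof. by rewrite dotD dotZ dotB. Qed.

Lemma lerp0 n (p p' : 'cV[R]_n) : lerp p p' 0 = p.
Proof. by rewrite /lerp scale0r addr0. Qed.

Lemma lerp1 n (p p' : 'cV[R]_n) : lerp p p' 1 = p'.
Proof. by rewrite /lerp scale1r addrC subrK. Qed.

Lemma lerp_rev n (p p' : 'cV[R]_n) l : lerp p' p (1 - l) = lerp p p' l.
Proof. by apply/matrixP => i j; rewrite /lerp !mxE; ring. Qed.

Lemma lerp_conv n (p p' : 'cV[R]_n) l1 l2 t :
  t *: lerp p p' l1 + (1 - t) *: lerp p p' l2 = lerp p p' (t * l1 + (1 - t) * l2).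
Proof. by apply/matrixP => i j; rewrite /lerp !mxE; ring. Qed.

Lemma segment_lerp n (p p' z : 'cV[R]_n) :
  segment p p' z -> exists2 l, 0 <= l <= 1 & z = lerp p p' l.
Proof.
move=> [t [t0 [t1 ->]]]; exists (1 - t); first by apply/andP; split; lra.
by apply/matrixP => i j; rewrite /lerp !mxE; ring.
Qed.

Lemma polyhedron_lerp m n (M : 'M[R]_(m, n)) r p p' l : polyhedron M r p ->
  polyhedron M r p' -> 0 <= l <= 1 -> polyhedron M r (lerp p p' l).
Proof.
move=> Pp Pp' /andP[l0 l1].
have -> : lerp p p' l = (1 - l) *: p + (1 - (1 - l)) *: p'.
  by apply/matrixP => i j; rewrite /lerp !mxE; ring.
by apply: polyhedron_conv => //; apply/andP; split; lra.
Qed.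

Section EdgeWalks.
Variables (n : nat) (P : 'cV[R]_n -> Prop).

Lemma dist_leS k v w : dist_le P k v w -> dist_le P k.+1 v w.
Proof.
elim: k v => [|k IHk] v /=; first by move->; left.
by case=> [-> | [u [vu uw]]]; [left | right; exists u; split=> //; exact: IHk].
Qed.

Lemma dist_le_leq k k' v w : (k <= k')%N -> dist_le P k v w -> dist_le P k' v w.
Proof.
by move=> /subnKC <-; elim: (k' - k)%N => [|j IHj]; rewrite ?addn0 ?addnS => // /IHj/dist_leS.
Qed.

Lemma dist_le_refl k v : dist_le P k v v.
Proof. by case: k => [|k] /=; [|left]. Qed.

Lemma dist_le_trans k1 k2 v u w :
  dist_le P k1 v u -> dist_le P k2 u w -> dist_le P (k1 + k2) v w.
Proof.
elim: k1 v => [|k IHk] v /=; first by move->.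
case=> [-> | [u' [vu' u'u]]] uw.
  by apply: (@dist_le_leq k2 (k.+1 + k2)) uw; rewrite leq_addl.
by right; exists u'; split=> //; exact: IHk.
Qed.

Lemma edge_dist_le1 v w : is_edge P v w -> dist_le P 1 v w.
Proof. by right; exists w. Qed.

Lemma dist_le1_sym v w : dist_le P 1 v w -> dist_le P 1 w v.
Proof. by case=> [-> | [u [vu /= <-]]]; [left | apply/edge_dist_le1/edge_sym]. Qed.

Lemma dist_le_map n' (Q : 'cV[R]_n' -> Prop) (f : 'cV[R]_n -> 'cV[R]_n') k v w :
  (forall v u, is_edge P v u -> is_edge Q (f v) (f u)) ->
  dist_le P k v w -> dist_le Q k (f v) (f w).
Proof.
move=> f_edge; elim: k v => [|k IHk] v /=; first by move->.
by case=> [-> | [u [vu uw]]]; [left | right; exists (f u); split; [exact: f_edge | exact: IHk]].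
Qed.

Fixpoint walk_in (Q : 'cV[R]_n -> Prop) k v w : Prop :=
  Q v /\ match k with
         | 0 => v = w
         | k'.+1 => v = w \/ exists u, is_edge P v u /\ walk_in Q k' u w
         end.

Lemma walk_in_head Q k v w : walk_in Q k v w -> Q v.
Proof. by case: k => [|k] []. Qed.

Lemma walk_in_refl (Q : 'cV[R]_n -> Prop) k v : Q v -> walk_in Q k v v.
Proof. by case: k => [|k] Qv; split=> //; left. Qed.

Lemma dist_le_walk_in (Q : 'cV[R]_n -> Prop) k v w :
  (forall u, Q u) -> dist_le P k v w -> walk_in Q k v w.
Proof.
move=> Q_all; elim: k v => [|k IHk] v //=.
by case=> [-> | [u [vu uw]]]; split=> //; [left | right; exists u; split=> //; exact: IHk].
Qed.

End EdgeWalks.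

End Polyhedra.

(** * The polyhedron R and its slices *)

Section BlockMatrices.
Variable R : realFieldType.

Lemma col_mx_forall n n' (Pr : R -> R -> R -> Prop) (u1 u2 u : 'cV[R]_n)
    (v1 v2 v : 'cV[R]_n') :
  (forall i, Pr (col_mx u1 v1 i 0) (col_mx u2 v2 i 0) (col_mx u v i 0)) <->
  (forall i, Pr (u1 i 0) (u2 i 0) (u i 0)) /\ (forall j, Pr (v1 j 0) (v2 j 0) (v j 0)).
Proof.
split=> [Pr_all | [Pr_u Pr_v] i].
  by split=> i; [have := Pr_all (lshift n' i) | have := Pr_all (rshift n i)];
    rewrite ?col_mxEu ?col_mxEd.
by rewrite -(splitK i); case: (split i) => j /=; rewrite ?col_mxEu ?col_mxEd.
Qed.

Lemma supp_le_col_mx n n' (e u : 'cV[R]_n) (e' v : 'cV[R]_n') :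
  supp_le (col_mx e e') (col_mx u v) <-> supp_le e u /\ supp_le e' v.
Proof. exact: (col_mx_forall (fun _ z e => z = 0 -> e = 0) u u e v v e'). Qed.

Lemma col_mx_ge0 n n' (u : 'cV[R]_n) (v : 'cV[R]_n') :
  (forall i, 0 <= col_mx u v i 0) <-> (forall i, 0 <= u i 0) /\ (forall j, 0 <= v j 0).
Proof. exact: (col_mx_forall (fun _ _ z => 0 <= z) u u u v v v). Qed.

Lemma mul_col_mx_row_eq0 m n (M : 'M[R]_(m, n)) (c : 'rV[R]_n) (e : 'cV[R]_n) :
  col_mx M c *m e = 0 <-> M *m e = 0 /\ dot c e = 0.
Proof.
rewrite mul_col_mx -col_mx0; split=> [/eq_col_mx[-> ce] | [-> ce]].
  by split=> //; rewrite ce mxE.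
by congr col_mx; apply/mx11_eq; rewrite ce mxE.
Qed.

Lemma polyhedron_col_mx_row m n (M : 'M[R]_(m, n)) (c : 'rV[R]_n) r s z :
  polyhedron (col_mx M c) (col_mx r s%:M) z <->
  [/\ M *m z = r, dot c z = s & forall i, 0 <= z i 0].
Proof.
rewrite /polyhedron mul_col_mx; split=> [[/eq_col_mx[Mz cz] z_ge0] | [Mz cz z_ge0]].
  by split=> //; rewrite cz mxE eqxx mulr1n.
by split=> //; rewrite Mz; congr col_mx; apply/mx11_eq; rewrite cz mxE eqxx mulr1n.
Qed.

Lemma mul_col_row_mx_eq0 m n (c : 'rV[R]_n) (M : 'M[R]_(m, n)) (e : 'cV[R]_n) :
  col_mx c M *m e = 0 <-> dot c e = 0 /\ M *m e = 0.
Proof.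
rewrite mul_col_mx -col_mx0; split=> [/eq_col_mx[ce ->] | [ce ->]].
  by split=> //; rewrite ce mxE.
by congr col_mx; apply/mx11_eq; rewrite ce mxE.
Qed.

Lemma polyhedron_col_row_mx m n (c : 'rV[R]_n) (M : 'M[R]_(m, n)) s r z :
  polyhedron (col_mx c M) (col_mx s%:M r) z <->
  [/\ dot c z = s, M *m z = r & forall i, 0 <= z i 0].
Proof.
rewrite /polyhedron mul_col_mx; split=> [[/eq_col_mx[cz Mz] z_ge0] | [cz Mz z_ge0]].
  by split=> //; rewrite cz mxE eqxx mulr1n.
by split=> //; rewrite Mz; congr col_mx; apply/mx11_eq; rewrite cz mxE eqxx mulr1n.
Qed.

End BlockMatrices.

Section ProductPolyhedron.
Variables (R : realFieldType) (m1 n1 m2 n2 : nat) (A : 'M[R]_(m1, n1)) (a : 'rV[R]_n1)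
  (b : 'rV[R]_n2) (B : 'M[R]_(m2, n2)) (cA : 'cV[R]_m1) (cB : 'cV[R]_m2) (ca cb : R).

Local Notation PR := (polyhedron (RM A a b B) (Rr cA cB ca cb)).
Local Notation PA := (polyhedron A cA).
Local Notation PB := (polyhedron B cB).
Local Notation cc := (ca + cb).
Local Notation PAbar s := (polyhedron (col_mx A a) (col_mx cA s%:M)).
Local Notation PBbar t := (polyhedron (col_mx b B) (col_mx t%:M cB)).

Lemma RM_mul (u : 'cV[R]_n1) (v : 'cV[R]_n2) :
  RM A a b B *m col_mx u v = col_mx (A *m u) (col_mx (a *m u + b *m v) (B *m v)).
Proof. by rewrite /RM !mul_col_mx !mul_row_col !mul0mx addr0 add0r. Qed.

Lemma polyhedron_RM u v : PR (col_mx u v) <->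
  [/\ A *m u = cA, dot a u + dot b v = cc, B *m v = cB,
      forall i, 0 <= u i 0 & forall j, 0 <= v j 0].
Proof.
rewrite /polyhedron RM_mul /Rr col_mx_ge0.
split=> [[/eq_col_mx[-> /eq_col_mx[abuv ->]] [? ?]] | [-> abuv -> ? ?]] //.
  by split=> //; rewrite -mxDE abuv mxE eqxx mulr1n.
by split=> //; do 2!congr col_mx; apply/mx11_eq; rewrite mxDE abuv mxE eqxx mulr1n.
Qed.

Lemma RM_mul_eq0 (e1 : 'cV[R]_n1) (e2 : 'cV[R]_n2) : RM A a b B *m col_mx e1 e2 = 0 <->
  [/\ A *m e1 = 0, dot a e1 + dot b e2 = 0 & B *m e2 = 0].
Proof.
rewrite RM_mul -!col_mx0.
split=> [/eq_col_mx[-> /eq_col_mx[abe ->]] | [-> abe ->]].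
  by split=> //; rewrite -mxDE abe mxE.
by do 2!congr col_mx; apply/mx11_eq; rewrite mxDE abe mxE.
Qed.

Lemma vertex_RMP u v : is_vertex PR (col_mx u v) <-> PR (col_mx u v) /\
  forall e1 e2, A *m e1 = 0 -> dot a e1 + dot b e2 = 0 -> B *m e2 = 0 ->
    supp_le e1 u -> supp_le e2 v -> e1 = 0 /\ e2 = 0.
Proof.
rewrite vertex_polyhedronP; split=> -[Puv indep]; split=> // e.
  move=> e2 Ae abe Be eu ev.
  have /eqP := indep (col_mx e e2) (proj2 (RM_mul_eq0 _ _) (And3 Ae abe Be))
    (proj2 (supp_le_col_mx _ _ _ _) (conj eu ev)).
  by rewrite col_mx_eq0 => /andP[/eqP -> /eqP ->].
rewrite -[e]vsubmxK => /RM_mul_eq0[Ae abe Be] /supp_le_col_mx[eu ev].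
by have [-> ->] := indep _ _ Ae abe Be eu ev; rewrite col_mx0.
Qed.

Lemma vertex_RM_indep u v : is_vertex PR (col_mx u v) -> supp_indep (col_mx b B) v.
Proof.
move=> /vertex_RMP[_ indep] e /mul_col_row_mx_eq0[be Be] ev.
have ab0 : dot a (0 : 'cV[R]_n1) + dot b e = 0 by rewrite dot0 add0r.
have supp0 : supp_le (0 : 'cV[R]_n1) u by move=> i _; rewrite mxE.
by have [] := indep 0 e (mulmx0 _ _) ab0 Be supp0 ev.
Qed.

Lemma edge_RM u1 v1 u2 v2 :
  is_vertex PR (col_mx u1 v1) -> is_vertex PR (col_mx u2 v2) -> col_mx u1 v1 <> col_mx u2 v2 ->
  (forall u v, PR (col_mx u v) -> (forall i, u1 i 0 = 0 -> u2 i 0 = 0 -> u i 0 = 0) ->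
     (forall j, v1 j 0 = 0 -> v2 j 0 = 0 -> v j 0 = 0) ->
     exists2 t, 0 <= t <= 1 & u = t *: u1 + (1 - t) *: u2 /\ v = t *: v1 + (1 - t) *: v2) ->
  is_edge PR (col_mx u1 v1) (col_mx u2 v2).
Proof.
move=> V1 V2 neq12 seg; apply: supp_segment_edge => // z.
rewrite -[z]vsubmxK => Pz /(col_mx_forall (fun x y z => x = 0 -> y = 0 -> z = 0))[su sv].
have [t /andP[t0 t1] [-> ->]] := seg _ _ Pz su sv.
by exists t; rewrite !scale_col_mx add_col_mx.
Qed.

Lemma vertex_lift_A w r : is_vertex PB w -> is_vertex (PAbar (cc - dot b w)) r ->
  is_vertex PR (col_mx r w).
Proof.
move=> /vertex_polyhedronP[[Bw w_ge0] w_indep].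
move=> /vertex_polyhedronP[/polyhedron_col_mx_row[Ar ar r_ge0] r_indep].
apply/vertex_RMP; split=> [|e1 e2 Ae1 abe Be2 e1r e2w].
  by apply/polyhedron_RM; split=> //; rewrite ar; ring.
have e2_0 : e2 = 0 := w_indep _ Be2 e2w.
split=> //; apply: r_indep e1r; apply/mul_col_mx_row_eq0; split=> //.
by move: abe; rewrite e2_0 dot0 addr0.
Qed.

Lemma vertex_lift_B r v : is_vertex PA r -> is_vertex (PBbar (cc - dot a r)) v ->
  is_vertex PR (col_mx r v).
Proof.
move=> /vertex_polyhedronP[[Ar r_ge0] r_indep].
move=> /vertex_polyhedronP[/polyhedron_col_row_mx[bv Bv v_ge0] v_indep].
apply/vertex_RMP; split=> [|e1 e2 Ae1 abe Be2 e1r e2v].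
  by apply/polyhedron_RM; split=> //; rewrite bv; ring.
have e1_0 : e1 = 0 := r_indep _ Ae1 e1r.
split=> //; apply: v_indep e2v; apply/mul_col_row_mx_eq0; split=> //.
by move: abe; rewrite e1_0 dot0 add0r.
Qed.

Lemma edge_lift_A w r r' : is_vertex PB w -> is_edge (PAbar (cc - dot b w)) r r' ->
  is_edge PR (col_mx r w) (col_mx r' w).
Proof.
move=> Vw rr'; have [Vr [Vr' [neq _]]] := rr'.
apply: edge_RM; [exact: vertex_lift_A | exact: vertex_lift_A | by case/eq_col_mx |].
move=> u v /polyhedron_RM[Au abuv Bv u_ge0 v_ge0] su sv.
have [[Bw _] w_indep] := proj1 (vertex_polyhedronP _ _ _) Vw.
have vw : v = w by apply: (supp_indep_inj w_indep) => // [|j wj]; rewrite ?Bv ?sv.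
subst v.
have Pu : PAbar (cc - dot b w) u by apply/polyhedron_col_mx_row; split=> //; lra.
have [t [t0 [t1 ->]]] := edge_supp_segment rr' Pu su.
by exists t; rewrite ?t0 // -scalerDl subrKC scale1r.
Qed.

Lemma edge_lift_B r v v' : is_vertex PA r -> is_edge (PBbar (cc - dot a r)) v v' ->
  is_edge PR (col_mx r v) (col_mx r v').
Proof.
move=> Vr vv'; have [Vv [Vv' [neq _]]] := vv'.
apply: edge_RM; [exact: vertex_lift_B | exact: vertex_lift_B | by case/eq_col_mx |].
move=> u w /polyhedron_RM[Au abuw Bw u_ge0 w_ge0] su sw.
have [[Ar _] r_indep] := proj1 (vertex_polyhedronP _ _ _) Vr.
have ur : u = r by apply: (supp_indep_inj r_indep) => // [|i ri]; rewrite ?Au ?su.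
subst u.
have Pw : PBbar (cc - dot a r) w by apply/polyhedron_col_row_mx; split=> //; lra.
have [t [t0 [t1 ->]]] := edge_supp_segment vv' Pw sw.
by exists t; rewrite ?t0 // -scalerDl subrKC scale1r.
Qed.

Lemma dist_lift_A D w r r' : mat_diam_le (col_mx A a) D -> is_vertex PB w ->
  is_vertex (PAbar (cc - dot b w)) r -> is_vertex (PAbar (cc - dot b w)) r' ->
  dist_le PR D (col_mx r w) (col_mx r' w).
Proof.
move=> diamA Vw Vr Vr'.
apply: (dist_le_map (f := fun u => col_mx u w)) (diamA _ _ _ Vr Vr') => u u'.
exact: edge_lift_A.
Qed.

Lemma dist_lift_B D r v v' : mat_diam_le (col_mx b B) D -> is_vertex PA r ->
  is_vertex (PBbar (cc - dot a r)) v -> is_vertex (PBbar (cc - dot a r)) v' ->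
  dist_le PR D (col_mx r v) (col_mx r v').
Proof.
move=> diamB Vr Vv Vv'.
apply: (dist_le_map (f := fun u => col_mx r u)) (diamB _ _ _ Vv Vv') => u u'.
exact: edge_lift_B.
Qed.

Lemma edge_slice_vertex p p' l : is_edge PA p p' -> dot a p != dot a p' -> 0 <= l <= 1 ->
  is_vertex (PAbar (dot a (lerp p p' l))) (lerp p p' l).
Proof.
move=> pp' ap_neq l01; set q := lerp p p' l.
have Pq : PA q by apply: polyhedron_lerp pp'.1.1 pp'.2.1.1 l01.
apply/vertex_polyhedronP; split; first by apply/polyhedron_col_mx_row; case: Pq.
move=> e /mul_col_mx_row_eq0[Ae ae] eq.
have [eps eps_gt0 small] := perturb_nonneg Pq.2 eq.
have Pqe : PA (q + eps *: e).
  split=> [|i]; last exact: (small i).1.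
  by rewrite mulmxDr -scalemxAr Ae scaler0 addr0 Pq.1.
have qe_supp i : p i 0 = 0 -> p' i 0 = 0 -> (q + eps *: e) i 0 = 0.
  move=> pi p'i; have qi : q i 0 = 0 by rewrite lerpE pi p'i subrr mulr0 addr0.
  by rewrite mxDE qi add0r mxE eq // mulr0.
have [mu _ qe_mu] := segment_lerp (edge_supp_segment pp' Pqe qe_supp).
have /eqP : (mu - l) * (dot a p' - dot a p) = 0.
  move: (congr1 (fun z => dot a z) qe_mu).
  by rewrite dotD dotZ ae mulr0 addr0 !dot_lerp; lra.
rewrite mulf_eq0 !subr_eq0 [dot a p' == _]eq_sym (negbTE ap_neq) orbF => /eqP mu_l.
move: qe_mu; rewrite mu_l -/q -{2}[q]addr0 => /addrI/eqP.
by rewrite scaler_eq0 gt_eqF // => /eqP.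
Qed.

End ProductPolyhedron.

(** * The band *)

Section Band.
Variables (R : realFieldType) (m2 n2 : nat) (b : 'rV[R]_n2) (B : 'M[R]_(m2, n2))
  (cB : 'cV[R]_m2) (cc : R) (y : 'cV[R]_n2).
Hypothesis y_indep : supp_indep (col_mx b B) y.

Definition band_witness (v : 'cV[R]_n2) :=
  [/\ forall j, 0 <= v j 0, B *m v = cB & supp_le v y].

(* [band s] is [s \in Band_x(y)], with [cc] for c_a + c_b. *)
Definition band (s : R) := exists2 v, band_witness v & s + dot b v = cc.

Lemma supp_indep_col_mx_inj (v w : 'cV[R]_n2) : B *m v = B *m w -> dot b v = dot b w ->
  supp_le v y -> supp_le w y -> v = w.
Proof.
move=> Bvw bvw; apply: (supp_indep_inj y_indep).
by rewrite !mul_col_mx Bvw; congr col_mx; apply/mx11_eq.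
Qed.

Lemma band_witness_inj v w : band_witness v -> band_witness w -> dot b v = dot b w -> v = w.
Proof. by move=> [_ Bv vy] [_ Bw wy] bvw; apply: supp_indep_col_mx_inj; rewrite ?Bv ?Bw. Qed.

Lemma band_witness_conv v w t : band_witness v -> band_witness w -> 0 <= t <= 1 ->
  band_witness (t *: v + (1 - t) *: w).
Proof.
move=> [v_ge0 Bv vy] [w_ge0 Bw wy] /andP[t0 t1]; split.
- by move=> j; rewrite !mxE; have := v_ge0 j; have := w_ge0 j; nra.
- by rewrite mulmxDr -!scalemxAr Bv Bw -scalerDl subrKC scale1r.
- by move=> j yj; rewrite !mxE vy // wy // !mulr0 addr0.
Qed.

Lemma band_convex : convex_set band.
Proof.
move=> s1 s2 s [v1 Wv1 e1] [v2 Wv2 e2] /between_conv[t t01 ->].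
exists (t *: v1 + (1 - t) *: v2); first exact: band_witness_conv.
by rewrite dotD !dotZ (_ : dot b v1 = cc - s1) 1?(_ : dot b v2 = cc - s2); lra.
Qed.

Lemma supp_ker_line d e : B *m d = 0 -> supp_le d y -> dot b d != 0 ->
  B *m e = 0 -> supp_le e y -> e = (dot b e / dot b d) *: d.
Proof.
move=> Bd dy bd Be ey; apply: supp_indep_col_mx_inj => //.
- by rewrite -scalemxAr Bd Be scaler0.
- by rewrite dotZ mulfVK.
- by move=> j yj; rewrite !mxE dy // mulr0.
Qed.

Lemma band_exit_flat s0 ds l0 w0 :
  (forall d, B *m d = 0 -> supp_le d y -> dot b d = 0) -> ds != 0 ->
  band_witness w0 -> s0 + l0 * ds + dot b w0 = cc ->
  (forall l, l0 < l -> ~ band (s0 + l * ds)) /\ supp_indep B w0.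
Proof.
move=> flat ds0 [_ Bw0 w0y] e0; split=> [l l0_lt [v [_ Bv vy] ev] | e Be ew0].
  have /eqP : (l - l0) * ds = 0.
    suff: dot b (v - w0) = 0 by rewrite dotB; lra.
    apply: flat; first by rewrite mulmxBr Bv Bw0 subrr.
    by move=> j yj; rewrite !mxE vy // w0y // subrr.
  by rewrite mulf_eq0 (negbTE ds0) orbF subr_eq0 gt_eqF.
have ey : supp_le e y by move=> j /w0y/ew0.
have Me : col_mx b B *m e = 0 by apply/mul_col_row_mx_eq0; split=> //; apply: flat.
exact: y_indep Me ey.
Qed.

(* All witnesses lie on the line w0 + R d' (supp_ker_line); its last feasible point
   is found by a ratio test. *)
Lemma band_exit_line s0 ds l0 w0 d : B *m d = 0 -> supp_le d y -> dot b d != 0 ->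
  ds != 0 -> l0 <= 1 -> band_witness w0 -> s0 + l0 * ds + dot b w0 = cc ->
  exists l w, [/\ l0 <= l <= 1, band_witness w, s0 + l * ds + dot b w = cc,
    forall l', l < l' <= 1 -> ~ band (s0 + l' * ds) & l < 1 -> supp_indep B w].
Proof.
move=> Bd dy bd0 ds0 l0_le1 [w0_ge0 Bw0 w0y] e0.
pose d' := (- ds / dot b d) *: d.
have bd' : dot b d' = - ds by rewrite dotZ mulfVK.
have Bd' : B *m d' = 0 by rewrite -scalemxAr Bd scaler0.
have d'y : supp_le d' y by move=> j yj; rewrite !mxE dy // mulr0.
clearbody d'.
have [|t [/andP[t_ge0 t_le] w_ge0 tight]] := ratio_test d' w0_ge0 (T := 1 - l0); first lra.
have on_line l v : band_witness v -> s0 + l * ds + dot b v = cc -> v = w0 + (l - l0) *: d'.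
  move=> [_ Bv vy] ev; apply: supp_indep_col_mx_inj => //.
  - by rewrite mulmxDr -scalemxAr Bd' scaler0 addr0 Bv Bw0.
  - by rewrite dotD dotZ bd'; lra.
  - by move=> j yj; rewrite !mxE w0y // d'y // mulr0 addr0.
have wy : supp_le (w0 + t *: d') y by move=> j yj; rewrite !mxE w0y // d'y // mulr0 addr0.
exists (l0 + t), (w0 + t *: d'); split.
- by apply/andP; split; lra.
- by split=> //; rewrite mulmxDr -scalemxAr Bd' scaler0 addr0.
- by rewrite dotD dotZ bd'; lra.
- move=> l /andP[l_gt l_le1] [v Wv ev].
  have [|j dj_lt0 wj0] := tight; first lra.
  have [v_ge0 _ _] := Wv; have := v_ge0 j.
  rewrite (on_line _ _ Wv ev) !mxE; move: wj0; rewrite !mxE; nra.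
- move=> l_lt1 e Be ew.
  have [|j dj_lt0 wj0] := tight; first lra.
  have ey : supp_le e y by move=> i /wy/ew.
  have bd'0 : dot b d' != 0 by rewrite bd' oppr_eq0.
  have eE := supp_ker_line Bd' d'y bd'0 Be ey.
  have /eqP := ew j wj0; rewrite eE mxE mulf_eq0 (lt_eqF dj_lt0) orbF => /eqP mu0.
  by rewrite mu0 scale0r.
Qed.

Lemma band_exit s0 ds l0 w0 : 0 <= l0 <= 1 -> band_witness w0 ->
  s0 + l0 * ds + dot b w0 = cc ->
  exists l w, [/\ l0 <= l <= 1, band_witness w, s0 + l * ds + dot b w = cc,
    forall l', l < l' <= 1 -> ~ band (s0 + l' * ds) & l < 1 -> supp_indep B w].
Proof.
move=> /andP[l0_ge0 l0_le1] Ww0 e0.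
have [ds0|ds0] := eqVneq ds 0.
  exists 1, w0; split; rewrite ?lexx ?l0_le1 ?ltxx //; last by move=> l /andP[? ?]; lra.
  by rewrite -e0 ds0 !mulr0.
case: (classic (exists d, [/\ B *m d = 0, supp_le d y & dot b d != 0])).
  by case=> d [Bd dy bd]; exact: band_exit_line Bd dy bd ds0 l0_le1 Ww0 e0.
move=> flat.
have [|no_band w0_indep] := band_exit_flat (l0 := l0) _ ds0 Ww0 e0.
  by move=> d Bd dy; have [|bd] := eqVneq (dot b d) 0; last (exfalso; apply: flat; exists d).
exists l0, w0; split; rewrite ?lexx ?l0_le1 // => l /andP[l_gt _]; exact: no_band.
Qed.

End Band.

(** * Rerouting an edge walk of P_A through R *)

Section BandWalk.
Variables (R : realFieldType) (m1 n1 m2 n2 : nat) (A : 'M[R]_(m1, n1)) (a : 'rV[R]_n1)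
  (b : 'rV[R]_n2) (B : 'M[R]_(m2, n2)) (cA : 'cV[R]_m1) (cB : 'cV[R]_m2) (ca cb : R)
  (x : 'cV[R]_n1) (y : 'cV[R]_n2).

Local Notation PR := (polyhedron (RM A a b B) (Rr cA cB ca cb)).
Local Notation PA := (polyhedron A cA).
Local Notation cc := (ca + cb).
Local Notation PAbar s := (polyhedron (col_mx A a) (col_mx cA s%:M)).
Local Notation PBbar t := (polyhedron (col_mx b B) (col_mx t%:M cB)).
Local Notation witness := (band_witness B cB y).
Local Notation inband s := (band b B cB cc y s).

Hypotheses (Vxy : is_vertex PR (col_mx x y)) (Vx : is_vertex PA x).

Let y_indep := vertex_RM_indep Vxy.

Lemma x_vertex_witness : witness y.
Proof. by have /polyhedron_RM[_ _ By _ y_ge0] := Vxy.1; split=> // i. Qed.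

Lemma x_inband : inband (dot a x).
Proof. by exists y; [exact: x_vertex_witness | have /polyhedron_RM[] := Vxy.1]. Qed.

Lemma lift_vertex p w : is_vertex PA p -> witness w -> dot a p + dot b w = cc ->
  is_vertex PR (col_mx p w).
Proof.
move=> /vertex_polyhedronP[[Ap p_ge0] p_indep] [w_ge0 Bw wy] e.
apply/vertex_RMP; split=> [|e1 e2 Ae1 abe Be2 e1p e2w]; first exact/polyhedron_RM.
have e1_0 : e1 = 0 := p_indep _ Ae1 e1p.
split=> //; apply: y_indep; last by move=> j /wy/e2w.
by apply/mul_col_row_mx_eq0; split=> //; move: abe; rewrite e1_0 dot0 add0r.
Qed.

(* [w] is the witness at the upper ([high]) or lower end of the band. *)
Definition boundary (high : bool) r w := [/\ witness w, supp_indep B w,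
  dot a r + dot b w = cc, is_vertex (PAbar (dot a r)) r &
  forall v, witness v -> if high then dot b w <= dot b v else dot b v <= dot b w].

Lemma boundary_vertex high r w : boundary high r w -> is_vertex PR (col_mx r w).
Proof.
move=> [[w_ge0 Bw _] w_indep e Vr _]; apply: vertex_lift_A.
  exact/vertex_polyhedronP.
by rewrite (_ : cc - dot b w = dot a r) //; lra.
Qed.

Variable D : nat.
Hypothesis diam_Abar : mat_diam_le (col_mx A a) D.

Lemma boundary_dist high r w r' w' : boundary high r w -> boundary high r' w' ->
  dist_le PR D (col_mx r w) (col_mx r' w').
Proof.
move=> [Ww w_indep e Vr w_ext] [Ww' _ e' Vr' w'_ext].
have ww' : w' = w.
  apply: (band_witness_inj y_indep Ww' Ww).
  by have := w_ext _ Ww'; have := w'_ext _ Ww; case: (high); lra.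
subst w'; have [w_ge0 Bw _] := Ww.
have ar : dot a r = cc - dot b w by lra.
have ar' : dot a r' = cc - dot b w by lra.
rewrite ar in Vr; rewrite ar' in Vr'.
by apply: dist_lift_A => //; apply/vertex_polyhedronP.
Qed.

Definition beyond (high : bool) (u : 'cV[R]_n1) := ~ inband (dot a u) /\
  (if high then dot a x < dot a u else dot a u < dot a x).

Lemma boundary_on_edge high p p' l w : is_edge PA p p' -> 0 <= l < 1 -> witness w ->
  dot a (lerp p p' l) + dot b w = cc -> supp_indep B w ->
  (forall l', l < l' <= 1 -> ~ inband (dot a (lerp p p' l'))) -> beyond high p' ->
  boundary high (lerp p p' l) w.
Proof.
move=> pp' /andP[l_ge0 l_lt1] Ww e w_indep gap [p'_out p'_side].
have q_in : inband (dot a (lerp p p' l)) by exists w.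
have ap_neq : dot a p != dot a p'.
  apply/eqP => ap_eq; apply: p'_out.
  by move: q_in; rewrite dot_lerp ap_eq subrr mulr0 addr0.
split=> //; first by apply: edge_slice_vertex => //; rewrite l_ge0 ltW.
have {}gap : forall s, (dot a (lerp p p' l) < s <= dot a p') ||
    (dot a p' <= s < dot a (lerp p p' l)) -> ~ inband s.
  have gap' l' : l < l' <= 1 -> ~ inband (dot a p + l' * (dot a p' - dot a p)).
    by rewrite -dot_lerp; exact: gap.
  move=> s; have := affine_gap (ltW l_lt1) gap' (s := s).
  by rewrite [dot a p + (_ - _)]addrC subrK dot_lerp.
move=> v Wv; have v_in : inband (cc - dot b v) by exists v; rewrite ?subrK.
case: high p'_side => p'_side.
  have := convex_set_ub (@band_convex _ _ _ b B cB cc y) q_in x_inband p'_out p'_side.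
  by move=> /(_ (fun s s_between => gap s (introT orP (or_introl s_between))) _ v_in); lra.
have := convex_set_lb (@band_convex _ _ _ b B cB cc y) q_in x_inband p'_out p'_side.
by move=> /(_ (fun s s_between => gap s (introT orP (or_intror s_between))) _ v_in); lra.
Qed.

Lemma lerp_lift_dist1 p p' l1 l2 w1 w2 : is_edge PA p p' -> l1 <= l2 ->
  witness w1 -> witness w2 ->
  dot a (lerp p p' l1) + dot b w1 = cc -> dot a (lerp p p' l2) + dot b w2 = cc ->
  is_vertex PR (col_mx (lerp p p' l1) w1) -> is_vertex PR (col_mx (lerp p p' l2) w2) ->
  (forall l v, 0 <= l <= 1 -> witness v -> dot a (lerp p p' l) + dot b v = cc ->
     l1 <= l <= l2) ->
  dist_le PR 1 (col_mx (lerp p p' l1) w1) (col_mx (lerp p p' l2) w2).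
Proof.
move=> pp' l12 Ww1 Ww2 e1 e2 V1 V2 fiber.
have [l12_eq | l12_neq] := eqVneq l1 l2.
  by subst l2; left; congr col_mx; apply: (band_witness_inj y_indep Ww1 Ww2); lra.
apply/edge_dist_le1/edge_RM => //.
  by case/eq_col_mx => /(lerp_inj pp'.2.2.1)/eqP; rewrite (negbTE l12_neq).
move=> u v /polyhedron_RM[Au abuv Bv u_ge0 v_ge0] su sv.
have [[_ _ w1y] [_ _ w2y]] := (Ww1, Ww2).
have u_supp i : p i 0 = 0 -> p' i 0 = 0 -> u i 0 = 0.
  by move=> pi p'i; apply: su; rewrite lerpE pi p'i subrr mulr0 addr0.
have [l l01 ul] := segment_lerp (edge_supp_segment pp' (conj Au u_ge0) u_supp).
have Wv : witness v by split=> // j yj; apply: sv; [exact: w1y | exact: w2y].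
have e_uv : dot a (lerp p p' l) + dot b v = cc by rewrite -ul.
have [t t01 lt] := between_conv (fiber l v l01 Wv e_uv).
exists t => //; split; first by rewrite lerp_conv -lt.
apply: (band_witness_inj y_indep Wv (band_witness_conv Ww1 Ww2 t01)).
rewrite dotD !dotZ.
have -> : dot b v = cc - dot a u by lra.
have -> : dot b w1 = cc - dot a (lerp p p' l1) by lra.
have -> : dot b w2 = cc - dot a (lerp p p' l2) by lra.
by rewrite ul !dot_lerp lt; ring.
Qed.

Lemma lift_edge_dist1 p p' w w' : is_edge PA p p' -> witness w -> witness w' ->
  dot a p + dot b w = cc -> dot a p' + dot b w' = cc ->
  dist_le PR 1 (col_mx p w) (col_mx p' w').
Proof.
move=> pp' Ww Ww' e e'.
have := @lerp_lift_dist1 p p' 0 1 w w' pp' ler01 Ww Ww'.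
rewrite lerp0 lerp1; apply=> //.
- exact: lift_vertex pp'.1 Ww e.
- exact: lift_vertex pp'.2.1 Ww' e'.
Qed.

Lemma edge_exit high p p' l0 w0 : is_edge PA p p' -> 0 <= l0 <= 1 -> witness w0 ->
  dot a (lerp p p' l0) + dot b w0 = cc -> beyond high p' ->
  exists l w, [/\ l0 <= l, boundary high (lerp p p' l) w &
    forall l', l < l' <= 1 -> ~ inband (dot a (lerp p p' l'))].
Proof.
move=> pp' l01 Ww0 e0 p'_beyond; rewrite dot_lerp in e0.
have [l [w [/andP[l0l l_le1] Ww e gap w_indep]]] := band_exit y_indep l01 Ww0 e0.
have gap_lerp l' : l < l' <= 1 -> ~ inband (dot a (lerp p p' l')).
  by rewrite dot_lerp; exact: gap.
rewrite -dot_lerp in e.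
have l_lt1 : l < 1.
  rewrite lt_neqAle l_le1 andbT; apply/eqP => l1; apply: p'_beyond.1.
  by exists w; rewrite // -(lerp1 p p') -l1.
exists l, w; split=> //; apply: boundary_on_edge => //; last exact: w_indep.
by rewrite l_lt1 (le_trans _ l0l) //; case/andP: l01.
Qed.

Lemma exit_boundary high p p' w : is_edge PA p p' -> witness w -> dot a p + dot b w = cc ->
  beyond high p' -> exists q w', boundary high q w' /\ dist_le PR 1 (col_mx p w) (col_mx q w').
Proof.
move=> pp' Ww e p'_beyond.
have e0 : dot a (lerp p p' 0) + dot b w = cc by rewrite lerp0.
have [|l [w' [l_ge0 Bq gap]]] := edge_exit pp' _ Ww e0 p'_beyond; first by rewrite lexx ler01.
exists (lerp p p' l), w'; split=> //; have [Ww' _ e' _ _] := Bq.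
rewrite -{1}(lerp0 p p'); apply: lerp_lift_dist1 => //; rewrite ?lerp0 //.
- exact: lift_vertex pp'.1 Ww e.
- exact: boundary_vertex Bq.
move=> l' v /andP[l'_ge0 l'_le1] Wv e_v; rewrite l'_ge0 /=.
by rewrite leNgt; apply/negP => l_lt; apply: (gap l'); [apply/andP | exists v].
Qed.

Lemma enter_boundary high p p' w' : is_edge PA p p' -> beyond high p -> witness w' ->
  dot a p' + dot b w' = cc ->
  exists q w, boundary high q w /\ dist_le PR 1 (col_mx q w) (col_mx p' w').
Proof.
move=> pp' p_beyond Ww' e'.
have [q [w [Bq d1]]] := exit_boundary (edge_sym pp') Ww' e' p_beyond.
by exists q, w; split=> //; exact: dist_le1_sym.
Qed.

Lemma cross_boundary high p p' : is_edge PA p p' -> beyond high p -> beyond (~~ high) p' ->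
  exists q w q' w', [/\ boundary high q w, boundary (~~ high) q' w' &
    dist_le PR 1 (col_mx q w) (col_mx q' w')].
Proof.
move=> pp' [p_out p_side] [p'_out p'_side].
have [|l0 l01] := between_lerp (s0 := dot a p) (s1 := dot a p') (t := dot a x).
  by case: (high) p_side p'_side => /= ? ?; apply/orP; [right | left]; rewrite !ltW.
rewrite -dot_lerp => x_l0.
have [ex_x ex_y] : dot a (lerp p p' l0) + dot b y = cc /\ witness y.
  by rewrite -x_l0; have /polyhedron_RM[] := Vxy.1; split=> //; exact: x_vertex_witness.
have [l2 [w2 [l0l2 B2 gap2]]] := edge_exit pp' l01 ex_y ex_x (conj p'_out p'_side).
have l01' : 0 <= 1 - l0 <= 1 by case/andP: l01 => ? ?; apply/andP; split; lra.
rewrite -lerp_rev in ex_x.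
have [l3 [w1 [l0l3 B1 gap1]]] := edge_exit (edge_sym pp') l01' ex_y ex_x (conj p_out p_side).
rewrite -[lerp p' p l3]lerp_rev in B1.
exists (lerp p p' (1 - l3)), w1, (lerp p p' l2), w2; split=> //.
have [[Ww1 _ e1 _ _] [Ww2 _ e2 _ _]] := (B1, B2).
apply: lerp_lift_dist1 => //; [lra | exact: boundary_vertex B1 | exact: boundary_vertex B2 |].
move=> l v /andP[l_ge0 l_le1] Wv e_v; apply/andP; split.
  rewrite leNgt; apply/negP => l_lt; apply: (gap1 (1 - l)); last by exists v; rewrite ?lerp_rev.
  by apply/andP; split; lra.
by rewrite leNgt; apply/negP => l_lt; apply: (gap2 l); [apply/andP | exists v].
Qed.

Definition region (lo hi : bool) (u : 'cV[R]_n1) :=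
  inband (dot a u) \/ (lo /\ beyond false u) \/ (hi /\ beyond true u).

Lemma beyond_not_restricted high lo hi u : beyond high u ->
  ~ region (lo && high) (hi && ~~ high) u.
Proof.
move=> [u_out u_side]; case=> [// | [[lo_ok [_ u_low]] | [hi_ok [_ u_high]]]].
  by case: high u_side lo_ok; rewrite ?andbF //= => ? _; lra.
by case: high u_side hi_ok; rewrite ?andbF //= => ? _; lra.
Qed.

Lemma unrestricted_beyond high lo hi u : region lo hi u ->
  ~ region (lo && high) (hi && ~~ high) u -> beyond high u.
Proof.
case=> [u_in | [[lo_ok u_low] | [hi_ok u_high]]] not_reg; first by case: not_reg; left.
  by case: high not_reg => // not_reg; case: not_reg; right; left; rewrite lo_ok.
by case: high not_reg => // not_reg; case: not_reg; right; right; rewrite hi_ok.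
Qed.

Lemma restricted_beyond_other high lo hi u :
  (lo && high /\ beyond false u) \/ (hi && ~~ high /\ beyond true u) ->
  beyond (~~ high) u /\ (if ~~ high then hi && ~~ high else lo && high).
Proof. by case: high; rewrite ?andbT ?andbF => -[[]|[]]. Qed.

Lemma restrict_budget (D0 k : nat) (lo hi high : bool) : (if high then hi else lo) ->
  (D0 + (1 + (k + D0 * ((lo && high) + (hi && ~~ high)))) <= k.+1 + D0 * (lo + hi))%N.
Proof. by case: high; case: lo; case: hi => //= _; lia. Qed.

(* The flags [lo] and [hi] say on which sides of the band the rest of the walk may
   still go; each allowed side is paid for once with a detour of length D through
   boundary vertices, which [dist_from_boundary] accounts for. *)
Section LiftedWalk.
Variables (x2 : 'cV[R]_n1) (z2 : 'cV[R]_n2).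
Hypotheses (Wz2 : witness z2) (e2 : dot a x2 + dot b z2 = cc).

Definition dist_from_band (k : nat) (lo hi : bool) (p : 'cV[R]_n1) :=
  forall w, witness w -> dot a p + dot b w = cc ->
  dist_le PR (k + D * (lo + hi)) (col_mx p w) (col_mx x2 z2).

Definition dist_from_boundary (k : nat) (lo hi : bool) (p : 'cV[R]_n1) :=
  forall high : bool, (if high then hi else lo) ->
  ~ walk_in PA (region (lo && high) (hi && ~~ high)) k p x2 ->
  forall r w, boundary high r w -> dist_le PR (k + D * (lo + hi)) (col_mx r w) (col_mx x2 z2).

Definition lift_bound (k : nat) := forall lo hi p, walk_in PA (region lo hi) k p x2 ->
  dist_from_band k lo hi p /\ dist_from_boundary k lo hi p.

Lemma lift_bound_target k lo hi : dist_from_band k lo hi x2 /\ dist_from_boundary k lo hi x2.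
Proof.
split=> [w Ww e | high _ no_walk]; last by case: no_walk; apply: walk_in_refl; left; exists z2.
have -> : w = z2.
  by apply: (band_witness_inj y_indep Ww Wz2); apply: (addrI (dot a x2)); rewrite e e2.
exact: dist_le_refl.
Qed.

Lemma dist_from_band_step k lo hi p u : lift_bound k -> is_edge PA p u ->
  walk_in PA (region lo hi) k u x2 -> dist_from_band k.+1 lo hi p.
Proof.
move=> IH pu walk w Ww e; have [IH_band IH_boundary] := IH _ _ _ walk.
have step n : dist_le PR 1 (col_mx p w) n ->
    dist_le PR (k + D * (lo + hi)) n (col_mx x2 z2) ->
    dist_le PR (k.+1 + D * (lo + hi)) (col_mx p w) (col_mx x2 z2).
  by move=> d1 d2; apply: (dist_le_leq _ (dist_le_trans d1 d2)); rewrite add1n addSn.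
case: (walk_in_head walk) => [[wu Wwu eu] | [[lo_ok u_low] | [hi_ok u_high]]].
- exact: step (lift_edge_dist1 pu Ww Wwu e eu) (IH_band _ Wwu eu).
- have [q [w' [Bq d1]]] := exit_boundary pu Ww e u_low.
  apply: step d1 (IH_boundary false lo_ok _ q w' Bq).
  by move/walk_in_head; exact: beyond_not_restricted u_low.
- have [q [w' [Bq d1]]] := exit_boundary pu Ww e u_high.
  apply: step d1 (IH_boundary true hi_ok _ q w' Bq).
  by move/walk_in_head; exact: beyond_not_restricted u_high.
Qed.

Lemma dist_from_boundary_cross k lo hi high p u r w : lift_bound k -> is_edge PA p u ->
  beyond high p -> walk_in PA (region (lo && high) (hi && ~~ high)) k u x2 ->
  (if high then hi else lo) -> boundary high r w ->
  dist_le PR (k.+1 + D * (lo + hi)) (col_mx r w) (col_mx x2 z2).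
Proof.
move=> IH pu p_beyond walk side_ok Brw; have [IH_band IH_boundary] := IH _ _ _ walk.
have step q wq n : boundary high q wq -> dist_le PR 1 (col_mx q wq) n ->
    dist_le PR (k + D * ((lo && high) + (hi && ~~ high))) n (col_mx x2 z2) ->
    dist_le PR (k.+1 + D * (lo + hi)) (col_mx r w) (col_mx x2 z2).
  move=> Bq d1 d2; apply: dist_le_leq (restrict_budget _ _ side_ok) _.
  exact: dist_le_trans (boundary_dist Brw Bq) (dist_le_trans d1 d2).
case: (walk_in_head walk) => [[wu Wwu eu] | u_beyond].
  have [q [wq [Bq d1]]] := enter_boundary pu p_beyond Wwu eu.
  exact: step Bq d1 (IH_band _ Wwu eu).
have [u_other other_ok] := restricted_beyond_other u_beyond.
have [q [wq [q' [wq' [Bq Bq' d1]]]]] := cross_boundary pu p_beyond u_other.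
apply: step Bq d1 (IH_boundary _ other_ok _ _ _ Bq').
by move/walk_in_head; exact: beyond_not_restricted u_other.
Qed.

Lemma dist_from_boundary_step k lo hi p u : lift_bound k -> is_edge PA p u ->
  region lo hi p -> walk_in PA (region lo hi) k u x2 -> dist_from_boundary k.+1 lo hi p.
Proof.
move=> IH pu p_reg walk high side_ok no_walk r w Brw.
have [_ IH_boundary] := IH _ _ _ walk.
have [p_in | p_out] := classic (region (lo && high) (hi && ~~ high) p).
  apply/dist_leS/(IH_boundary _ side_ok) => // walk_u.
  by apply: no_walk; split=> //; right; exists u.
have p_beyond := unrestricted_beyond p_reg p_out.
have [walk_u | no_walk_u] :=
  classic (walk_in PA (region (lo && high) (hi && ~~ high)) k u x2).
  exact: dist_from_boundary_cross IH pu p_beyond walk_u side_ok Brw.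
exact/dist_leS/(IH_boundary _ side_ok).
Qed.

Lemma walk_lift_bound k : lift_bound k.
Proof.
elim: k => [|k IH] lo hi p /= [p_reg walk]; first by subst p; exact: lift_bound_target.
case: walk => [-> | [u [pu walk]]]; first exact: lift_bound_target.
split; first exact: dist_from_band_step IH pu walk.
exact: dist_from_boundary_step IH pu p_reg walk.
Qed.

End LiftedWalk.

Lemma x_vertex_dist x' y' z dPA dBbar : is_vertex PR (col_mx x' y') -> is_vertex PA x' ->
  witness z -> dot a x' + dot b z = cc -> diam_le PA dPA -> mat_diam_le (col_mx b B) dBbar ->
  dist_le PR (dPA + 2 * D + dBbar) (col_mx x y) (col_mx x' y').
Proof.
move=> Vxy' Vx' Wz ez diamA diamB.
have everywhere u : region true true u.
  have [u_in | u_out] := classic (inband (dot a u)); first by left.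
  right; have [u_lt | u_gt | u_eq] := ltgtP (dot a u) (dot a x).
  - by left; split=> //; split.
  - by right; split=> //; split.
  - by case: u_out; rewrite u_eq; exact: x_inband.
have walk := dist_le_walk_in everywhere (diamA _ _ Vx Vx').
have [to_z _] := walk_lift_bound Wz ez walk.
have ex : dot a x + dot b y = cc by have /polyhedron_RM[] := Vxy.1.
have Vz : is_vertex (PBbar (cc - dot a x')) z.
  have [z_ge0 Bz zy] := Wz; apply/vertex_polyhedronP; split.
    by apply/polyhedron_col_row_mx; split=> //; lra.
  exact: supp_indep_sub y_indep zy.
have Vy' : is_vertex (PBbar (cc - dot a x')) y'.
  have /polyhedron_RM[_ e' By' _ y'_ge0] := Vxy'.1.
  apply/vertex_polyhedronP; split; last exact: vertex_RM_indep Vxy'.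
  by apply/polyhedron_col_row_mx; split=> //; lra.
have := dist_le_trans (to_z y x_vertex_witness ex) (dist_lift_B diamB Vx' Vz Vy').
by apply: dist_le_leq; rewrite mulnC.
Qed.

End BandWalk.

Theorem lemma5 (R : realFieldType) (m1 n1 m2 n2 : nat)
  (A : 'M[R]_(m1, n1)) (a : 'rV[R]_n1) (b : 'rV[R]_n2) (B : 'M[R]_(m2, n2))
  (cA : 'cV[R]_m1) (cB : 'cV[R]_m2) (ca cb : R)
  (Ha : a != 0) (Hb : b != 0)
  (Hsimple : std_nondegenerate (RM A a b B) (Rr cA cB ca cb))
  (x x' : 'cV[R]_n1) (y y' : 'cV[R]_n2)
  (Hxy : x_vertex A a b B cA cB ca cb x y)
  (Hxy' : x_vertex A a b B cA cB ca cb x' y')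
  (Hband : in_band b B cB ca cb y ((a *m x') 0 0))
  (dPA dAbar dBbar : nat)
  (HdPA : diam_le (polyhedron A cA) dPA)
  (HdAbar : mat_diam_le (col_mx A a) dAbar)
  (HdBbar : mat_diam_le (col_mx b B) dBbar) :
  dist_le (polyhedron (RM A a b B) (Rr cA cB ca cb))
    (dPA + 2 * dAbar + dBbar + 2)%N (col_mx x y) (col_mx x' y').
Proof.
move: Hxy Hxy' Hband => [Vxy Vx] [Vxy' Vx'] [z [Bz z_ge0 z_supp ez]].
have Wz : band_witness B cB y z.
  by split=> // j yj; case: (eqVneq (z j 0) 0) => // /z_supp; rewrite yj eqxx.
have ez' : dot a x' + dot b z = ca + cb by rewrite ez subrK.
apply: dist_le_leq (x_vertex_dist Vxy Vx HdAbar Vxy' Vx' Wz ez' HdPA HdBbar).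
exact: leq_addr.
Qed.
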